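(* Let $w,w'\in[0,1]$ with $w+w'=1$, and let $\textbf{F}$ be a $gH$-differentiable IVF on a nonempty subset $\mathcal{X}$ of $\mathbb{R}^n$. Then \[\lVert\mathcal{W}(\nabla\textbf{F}(x))-\mathcal{W}(\nabla\textbf{F}(y))\rVert\le\lVert\nabla\textbf{F}(x)\ominus_{gH}\nabla\textbf{F}(y)\rVert_{I(\mathbb{R})^n}\quad\text{for all }x,y\in\mathcal{X},\] where the left-hand norm is the Euclidean norm on $\mathbb{R}^n$.
   Context: $I(\mathbb{R})$: closed bounded intervals $\textbf{A}=[\underline{a},\overline{a}]$ with Moore arithmetic ($\oplus$ endpointwise; $\lambda\odot\textbf{A}=[\lambda\underline{a},\lambda\overline{a}]$ if $\lambda\ge0$, $[\lambda\overline{a},\lambda\underline{a}]$ if $\lambda<0$); $\textbf{A}\ominus_{gH}\textbf{B}=[\min\{\underline{a}-\underline{b},\overline{a}-\overline{b}\},\max\{\underline{a}-\underline{b},\overline{a}-\overline{b}\}]$ (componentwise on $I(\mathbb{R})^n$). Norms: $\lVert\textbf{A}\rVert_{I(\mathbb{R})}=\max\{|\underline{a}|,|\overline{a}|\}$; $\lVert(\textbf{A}_1,\dots,\textbf{A}_n)\rVert_{I(\mathbb{R})^n}=\sum_i\lVert\textbf{A}_i\rVert_{I(\mathbb{R})}$. $D_i\textbf{F}(x)=\lim_{h\to0}\frac1h\odot(\textbf{F}(x+he_i)\ominus_{gH}\textbf{F}(x))$, $\nabla\textbf{F}(x)=(D_1\textbf{F}(x),\dots,D_n\textbf{F}(x))^T$.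 Linear IVF: $\textbf{L}(x)=\bigoplus_i x_i\odot\textbf{L}(e_i)$. $\textbf{F}$ is $gH$-differentiable at $\bar{x}$ if there exist a linear IVF $\textbf{L}_{\bar{x}}$, an IVF $\textbf{E}(\textbf{F}(\bar{x});d)$ and $\delta>0$ with $(\textbf{F}(\bar{x}+d)\ominus_{gH}\textbf{F}(\bar{x}))\ominus_{gH}\textbf{L}_{\bar{x}}(d)=\lVert d\rVert\odot\textbf{E}(\textbf{F}(\bar{x});d)$ for $\lVert d\rVert<\delta$ and $\textbf{E}\to\textbf{0}$ as $\lVert d\rVert\to0$. $\mathcal{W}(\textbf{A}_1,\dots,\textbf{A}_n)=(w\underline{a}_1+w'\overline{a}_1,\dots,w\underline{a}_n+w'\overline{a}_n)^T$. *)

From HB Require Import structures.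
From mathcomp Require Import all_boot all_order all_algebra.
From mathcomp Require Import reals.
Set Implicit Arguments. Unset Strict Implicit. Unset Printing Implicit Defensive.
Import Order.TTheory GRing.Theory Num.Theory.
Local Open Scope ring_scope.

Section IntervalArith.
Variable R : realType.

Record itv := Itv { lo : R; hi : R; itv_ok : lo <= hi }.

Lemma itv_add_ok (A B : itv) : lo A + lo B <= hi A + hi B.
Proof. by apply: lerD; case: A; case: B. Qed.
Definition itv_add (A B : itv) : itv := Itv (itv_add_ok A B).

Lemma itv_scale_ok (l : R) (A : itv) :
  (if 0 <= l then l * lo A else l * hi A) <= (if 0 <= l then l * hi A else l * lo A).
Proof.
case: A => a b /= hab; case: ifP => hl.
- by apply: ler_wpM2l.
- by apply: ler_wnM2l => //; apply: ltW; rewrite ltNge hl.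
Qed.
Definition itv_scale (l : R) (A : itv) : itv := Itv (itv_scale_ok l A).

Lemma itv_gH_ok (A B : itv) :
  Num.min (lo A - lo B) (hi A - hi B) <= Num.max (lo A - lo B) (hi A - hi B).
Proof. by rewrite ge_min !le_max lexx. Qed.
Definition itv_gH (A B : itv) : itv := Itv (itv_gH_ok A B).

Lemma itv0_ok : (0 : R) <= 0. Proof. by []. Qed.
Definition itv0 : itv := Itv itv0_ok.

Definition itv_norm (A : itv) : R := Num.max `|lo A| `|hi A|.

Definition enorm (n : nat) (x : 'rV[R]_n) : R := Num.sqrt (\sum_i (x 0 i) ^+ 2).

Definition ebasis (n : nat) (i : 'I_n) : 'rV[R]_n := delta_mx 0 i.

(* linear IVF L(x) = (+)_i x_i (.) L(e_i), given the values Le i = L(e_i) *)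
Definition lin_ivf (n : nat) (Le : 'I_n -> itv) (x : 'rV[R]_n) : itv :=
  \big[itv_add/itv0]_(i < n) itv_scale (x 0 i) (Le i).

Definition gH_differentiable (n : nat) (F : 'rV[R]_n -> itv) (xb : 'rV[R]_n) : Prop :=
  exists (Le : 'I_n -> itv) (E : 'rV[R]_n -> itv) (delta : R),
    0 < delta /\
    (forall d : 'rV[R]_n, enorm d < delta ->
       itv_gH (itv_gH (F (xb + d)) (F xb)) (lin_ivf Le d) = itv_scale (enorm d) (E d)) /\
    (forall eps : R, 0 < eps -> exists eta : R, 0 < eta /\
       forall d : 'rV[R]_n, d != 0 -> enorm d < eta -> itv_norm (E d) < eps).

(* D_i F(x) = lim_{h->0} (1/h) (.) (F(x + h e_i) -gH F(x)), limit w.r.t. the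
   metric (A, B) |-> ||A -gH B||_{I(R)} on I(R) *)
Definition is_partial (n : nat) (F : 'rV[R]_n -> itv) (x : 'rV[R]_n) (i : 'I_n)
  (D : itv) : Prop :=
  forall eps : R, 0 < eps -> exists delta : R, 0 < delta /\
    forall h : R, h != 0 -> `|h| < delta ->
      itv_norm (itv_gH (itv_scale h^-1 (itv_gH (F (x + h *: ebasis i)) (F x))) D) < eps.

Definition is_gradient (n : nat) (F : 'rV[R]_n -> itv) (x : 'rV[R]_n)
  (G : 'I_n -> itv) : Prop := forall i, is_partial F x i (G i).

Definition itvn_norm (n : nat) (G : 'I_n -> itv) : R := \sum_i itv_norm (G i).

Definition itvn_gH (n : nat) (G H : 'I_n -> itv) : 'I_n -> itv :=
  fun i => itv_gH (G i) (H i).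

Definition Wmap (n : nat) (w w' : R) (G : 'I_n -> itv) : 'rV[R]_n :=
  \row_i (w * lo (G i) + w' * hi (G i)).

End IntervalArith.

From HB Require Import structures.
From mathcomp Require Import all_boot all_order all_algebra.
From mathcomp Require Import reals.
From mathcomp Require Import lra.
Set Implicit Arguments. Unset Strict Implicit. Unset Printing Implicit Defensive.
Import Order.TTheory GRing.Theory Num.Theory.
Local Open Scope ring_scope.

(** The endpoint differences [lo A - lo B] and [hi A - hi B] are, in some
    order, the two endpoints of [A -gH B], so [||A -gH B||] is the larger of
    their absolute values; a convex combination of two reals is bounded in
    absolute value by that maximum.  Hence each component of [W] is
    1-Lipschitz for the gH distance, and summing over the components, using
    that the Euclidean norm is dominated by the l1 norm, gives the bound.
    Neither the differentiability of [F] nor the fact that the interval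
    vectors are gradients plays any role. *)

Lemma sum_sqr_le_sqr_sum (R : realDomainType) (I : finType) (c : I -> R) :
  (forall i, 0 <= c i) -> \sum_i c i ^+ 2 <= (\sum_i c i) ^+ 2.
Proof.
move=> c_ge0.
suff [] : \sum_i c i ^+ 2 <= (\sum_i c i) ^+ 2 /\ 0 <= \sum_i c i by [].
apply: (big_rec2 (fun s t => s <= t ^+ 2 /\ 0 <= t)); first by rewrite expr0n.
by move=> i s t _ [le_st t_ge0]; have := c_ge0 i; split; nra.
Qed.

Lemma enorm_le_sum_norm (R : realType) (n : nat) (v : 'rV[R]_n) :
  enorm v <= \sum_i `|v 0 i|.
Proof.
have sum_ge0 : 0 <= \sum_i `|v 0 i| by apply: sumr_ge0 => i _.
rewrite /enorm -(ger0_norm sum_ge0) -sqrtr_sqr ler_wsqrtr //.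
under eq_bigr do rewrite -real_normK ?num_real //.
exact: sum_sqr_le_sqr_sum.
Qed.

Lemma norm_convex_le_max (R : realDomainType) (w w' a b : R) :
  0 <= w -> 0 <= w' -> w + w' = 1 -> `|w * a + w' * b| <= Num.max `|a| `|b|.
Proof.
move=> w_ge0 w'_ge0 ww'1.
apply: (le_trans (ler_normD _ _)); rewrite !normrM (ger0_norm w_ge0) (ger0_norm w'_ge0).
rewrite -[leRHS]mul1r -ww'1 mulrDl.
by apply: lerD; apply: ler_wpM2l; rewrite // le_max lexx ?orbT.
Qed.

Lemma max_norm_min_max (R : realDomainType) (a b : R) :
  Num.max `|Num.min a b| `|Num.max a b| = Num.max `|a| `|b|.
Proof. by case: (leP a b) => _ //; rewrite maxC. Qed.

Lemma itv_norm_gH (R : realType) (A B : itv R) :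
  itv_norm (itv_gH A B) = Num.max `|lo A - lo B| `|hi A - hi B|.
Proof. exact: max_norm_min_max. Qed.

Lemma norm_Wmap_sub_le (R : realType) (n : nat) (w w' : R)
    (G H : 'I_n -> itv R) (i : 'I_n) :
  0 <= w -> 0 <= w' -> w + w' = 1 ->
  `|(Wmap w w' G - Wmap w w' H) 0 i| <= itv_norm (itvn_gH G H i).
Proof.
move=> w_ge0 w'_ge0 ww'1; rewrite !mxE itv_norm_gH.
rewrite opprD addrACA -!mulrBr.
exact: norm_convex_le_max.
Qed.

Theorem lemma5p3 (R : realType) (n : nat) (w w' : R)
  (hw : 0 <= w <= 1) (hw' : 0 <= w' <= 1) (hww : w + w' = 1)
  (X : 'rV[R]_n -> Prop) (hX : exists x, X x)
  (F : 'rV[R]_n -> itv R)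
  (hF : forall x, X x -> gH_differentiable F x) :
  forall (x y : 'rV[R]_n) (Gx Gy : 'I_n -> itv R),
    X x -> X y -> is_gradient F x Gx -> is_gradient F y Gy ->
    enorm (Wmap w w' Gx - Wmap w w' Gy) <= itvn_norm (itvn_gH Gx Gy).
Proof.
move=> x y Gx Gy _ _ _ _.
case/andP: hw => w_ge0 _; case/andP: hw' => w'_ge0 _.
apply: (le_trans (enorm_le_sum_norm _)).
by apply: ler_sum => i _; apply: norm_Wmap_sub_le.
Qed.
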